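(* Let $G$, $A$, $H$, $(K,v)$, $\sigma$, $\delta$ be as in the context, let $\alpha,\alpha':H\to G$ be two transversal maps with associated cocycles $\beta,\beta'$. Then the valued field $(K(t^H,\beta')_\delta,val')$, with value group $G_{\beta'}$, is isomorphic as a valued field to $(K(t^H,\beta)_\delta,val)$, with value group $G_\beta$.
   Context: $G$ is an ordered abelian group with smallest nonzero convex subgroup $A$, $H=G/A$ with the induced order, $\rho:G\to H$ the projection. A transversal map is $\alpha:H\to G$ with $\rho\alpha=\mathrm{id}_H$, $\alpha(0)=0$; its cocycle is $\beta(h,h')=\alpha(h+h')-\alpha(h)-\alpha(h')\in A$. $G_\beta$ is $A\times H$ with $(z,h)+(z',h')=(z+z'-\beta(h,h'),h+h')$ and lexicographic order ($(z,h)\le(z',h')$ iff $h<h'$, or $h=h'$ and $z\le z'$). $(K,v)$ is a valued field of characteristic $0$, residue characteristic $p$, value group $A$, with cross-section $\sigma:A\to K^\times$ ($v(\sigma(a))=a$). For an infinite cardinal $\delta$, $K(t^H,\beta)_\delta$ is the field of formal sums $\sum_{h\in S}a_ht^h$, $S\subseteq H$ well ordered, $|S|\le\delta$, $a_h\in K$, with coefficientwise addition, multiplication $\left(\sum a_ht^h\right)\left(\sum b_ht^h\right)=\sum_l\left(\sum_{h+h'=l}a_hb_{h'}\sigma(-\beta(h,h'))\right)t^l$, and valuation $val(\sum_{h\in S}a_ht^h)=(v(a_{h_0}),h_0)$, $h_0=\min S$; similarly for $\beta'$. *)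

From HB Require Import structures.
From mathcomp Require Import all_boot all_order all_algebra.
From mathcomp Require Import boolp classical_sets fsbigop.
Set Implicit Arguments. Unset Strict Implicit. Unset Printing Implicit Defensive.
Import Order.TTheory GRing.Theory.
Local Open Scope ring_scope.

Section Defs.
Variables (G A H : zmodType) (leG : G -> G -> Prop) (leH : H -> H -> Prop).

Definition ordered_abelian_group : Prop :=
  [/\ forall x, leG x x,
      forall x y, leG x y -> leG y x -> x = y,
      forall x y z, leG x y -> leG y z -> leG x z,
      forall x y, leG x y \/ leG y x
    & forall x y z, leG x y -> leG (x + z) (y + z)].

Definition convex_subgroup (S : G -> Prop) : Prop :=
  [/\ S 0,
      forall x y, S x -> S y -> S (x - y)
    & forall x y z, S x -> S z -> leG x y -> leG y z -> S y].

Definition nonzero_set (S : G -> Prop) : Prop := exists x, S x /\ x <> 0.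

Definition smallest_nonzero_convex_subgroup (S : G -> Prop) : Prop :=
  [/\ convex_subgroup S, nonzero_set S &
      forall T, convex_subgroup T -> nonzero_set T -> forall x, S x -> T x].

Definition leA (iota : A -> G) (a b : A) : Prop := leG (iota a) (iota b).

(** G_beta = A x H with the twisted addition and the lexicographic order. *)
Definition addGb (beta : H -> H -> A) (x y : A * H) : A * H :=
  (x.1 + y.1 - beta x.2 y.2, x.2 + y.2).

Definition leGb (iota : A -> G) (x y : A * H) : Prop :=
  (leH x.2 y.2 /\ x.2 <> y.2) \/ (x.2 = y.2 /\ leA iota x.1 y.1).

Variables (K : fieldType) (D : Type).

(** support of a formal sum f = sum_h f(h) t^h *)
Definition supp (f : H -> K) : H -> Prop := fun h => f h <> 0.

Definition well_ordered_in (S : H -> Prop) : Prop :=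
  forall P : H -> Prop, (forall h, P h -> S h) -> (exists h, P h) ->
    exists m, P m /\ forall h, P h -> leH m h.

(** |S| <= delta, delta being the cardinality of the type D *)
Definition card_le (S : H -> Prop) : Prop :=
  exists e : H -> D, forall h h', S h -> S h' -> e h = e h' -> h = h'.

(** elements of K(t^H, beta)_delta (the carrier does not depend on beta) *)
Definition is_series (f : H -> K) : Prop :=
  well_ordered_in (supp f) /\ card_le (supp f).

Definition ser_add (f g : H -> K) : H -> K := fun h => f h + g h.

Definition ser_mul (sigma : A -> K) (beta : H -> H -> A) (f g : H -> K)
  : H -> K := fun l =>
  (\sum_(h \in [set: H]) (f h * g (l - h) * sigma (- beta h (l - h))))%R.

Definition is_val (v : K -> A) (f : H -> K) (x : A * H) : Prop :=
  f x.2 <> 0 /\ (forall h, f h <> 0 -> leH x.2 h) /\ x.1 = v (f x.2).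

End Defs.

From HB Require Import structures.
From mathcomp Require Import all_boot all_order all_algebra.
From mathcomp Require Import boolp classical_sets fsbigop ring.
Set Implicit Arguments. Unset Strict Implicit. Unset Printing Implicit Defensive.
Import GRing.Theory.
Local Open Scope ring_scope.

(* Two transversals differ by a map gamma : H -> A, since alpha h - alpha' h
   lies in ker rho = A; hence beta = beta' + coboundary gamma.  Rescaling the
   coefficients f_h |-> f_h * sigma (- gamma h) and shifting values
   (a, h) |-> (a - gamma h, h) then intertwines the two twisted products, the
   two group laws and the two valuations: sigma turns the additive coboundary
   into exactly the multiplicative factor relating the two products. *)

Section Coboundary.
Variables (A H : zmodType).

Definition coboundary (gamma : H -> A) (h h' : H) : A :=
  gamma (h + h') - gamma h - gamma h'.

Definition shiftGb (gamma : H -> A) (x : A * H) : A * H := (x.1 - gamma x.2, x.2).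

Lemma bijective_shiftGb gamma : bijective (shiftGb gamma).
Proof.
by exists (fun x => (x.1 + gamma x.2, x.2)) => -[a h]; rewrite /shiftGb /= ?subrK ?addrK.
Qed.

Lemma coboundaryB (f g : H -> A) h h' :
  coboundary (fun h => f h - g h) h h' = coboundary f h h' - coboundary g h h'.
Proof. by rewrite /coboundary !opprD !opprK [X in X + _]addrACA (addrACA (_ - f h)). Qed.

Variables (gamma : H -> A) (beta beta' : H -> H -> A).
Hypothesis beta_cohom : forall h h', beta h h' = beta' h h' + coboundary gamma h h'.

Lemma cohomologousE h h' : beta' h h' + gamma (h + h') = gamma h + gamma h' + beta h h'.
Proof.
by rewrite beta_cohom /coboundary [RHS]addrCA -[in RHS](addrA (gamma (h + h'))) -opprD subrKC.
Qed.

Lemma shiftGb_addGb x y :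
  shiftGb gamma (addGb beta' x y) = addGb beta (shiftGb gamma x) (shiftGb gamma y).
Proof.
rewrite /shiftGb /addGb /=; congr (_, _).
by rewrite -addrA -opprD cohomologousE addrACA -opprD !opprD !addrA.
Qed.

End Coboundary.

Section OrderedGroup.
Variables (G A : zmodType) (leG : G -> G -> Prop) (iota : A -> G).
Hypothesis leG_order : ordered_abelian_group leG.
Hypothesis iota_sub : forall a b, iota (a - b) = iota a - iota b.

Lemma leG_subr x y z : leG (x - z) (y - z) <-> leG x y.
Proof.
case: leG_order => _ _ _ _ leG_add; split; last exact: leG_add.
by move=> /(leG_add _ _ z); rewrite !subrK.
Qed.

Lemma leA_subr a b c : leA leG iota (a - c) (b - c) <-> leA leG iota a b.
Proof. by rewrite /leA !iota_sub; apply: leG_subr. Qed.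

Lemma leGb_shiftGb (H : zmodType) (leH : H -> H -> Prop) (gamma : H -> A) x y :
  leGb leG leH iota (shiftGb gamma x) (shiftGb gamma y) <-> leGb leG leH iota x y.
Proof.
move: x y => [a h] [b h']; rewrite /leGb /=.
split=> -[lt_hh' | [eq_hh' le_ab]]; try by left.
  by right; split=> //; move: le_ab; rewrite -eq_hh' leA_subr.
by right; split=> //; rewrite -eq_hh' leA_subr.
Qed.

End OrderedGroup.

Section Scaling.
Variables (H : zmodType) (leH : H -> H -> Prop) (D : Type) (K : fieldType).

Definition ser_scale (c f : H -> K) : H -> K := fun h => f h * c h.

Variable c : H -> K.
Hypothesis c_nz : forall h, c h <> 0.

Lemma supp_ser_scale f : supp (ser_scale c f) = supp f.
Proof.
apply: funext => h; apply: propext; rewrite /supp /ser_scale.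
split=> [fch_nz fh0 | /eqP fh_nz]; first by apply: fch_nz; rewrite fh0 mul0r.
by apply/eqP; rewrite mulf_neq0 //; apply/eqP.
Qed.

Lemma is_series_scale f : is_series leH D (ser_scale c f) <-> is_series leH D f.
Proof. by rewrite /is_series supp_ser_scale. Qed.

Lemma ser_scaleK d : (forall h, c h * d h = 1) -> cancel (ser_scale c) (ser_scale d).
Proof. by move=> cd1 f; apply: funext => h; rewrite /ser_scale -mulrA cd1 mulr1. Qed.

Lemma ser_scaleD f g : ser_scale c (ser_add f g) = ser_add (ser_scale c f) (ser_scale c g).
Proof. by apply: funext => h; rewrite /ser_scale /ser_add mulrDl. Qed.

Lemma is_val_scale (A : zmodType) (v : K -> A) f x :
    (forall y z, y <> 0 -> z <> 0 -> v (y * z) = v y + v z) ->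
  is_val leH v f x -> is_val leH v (ser_scale c f) (x.1 + v (c x.2), x.2).
Proof.
move=> v_mul [fx_nz [x_min ->]]; rewrite /is_val /=.
have cfx_nz : supp (ser_scale c f) x.2 by rewrite supp_ser_scale.
split=> //; split; last by rewrite v_mul.
by move=> h; rewrite -/(supp _ h) supp_ser_scale; apply: x_min.
Qed.

End Scaling.

Section CrossSection.
Variables (A H : zmodType) (K : fieldType) (sigma : A -> K).
Hypothesis sigma_nz : forall a, sigma a <> 0.
Hypothesis sigma_add : forall a b, sigma (a + b) = sigma a * sigma b.

Lemma sigma0 : sigma 0 = 1.
Proof.
apply: (@mulfI _ (sigma 0)); first exact/eqP.
by rewrite mulr1 -sigma_add addr0.
Qed.

Lemma sigmaNK a : sigma (- a) * sigma a = 1.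
Proof. by rewrite -sigma_add addNr sigma0. Qed.

Variables (gamma : H -> A) (beta beta' : H -> H -> A).
Hypothesis beta_cohom : forall h h', beta h h' = beta' h h' + coboundary gamma h h'.

Let c h := sigma (- gamma h).

Lemma ser_mul_scale f g :
  ser_scale c (ser_mul sigma beta' f g) =
  ser_mul sigma beta (ser_scale c f) (ser_scale c g).
Proof.
apply: funext => l; rewrite /ser_scale /ser_mul mulr_fsuml.
apply: eq_fsbigr => h _; rewrite /c.
have sigma_cohom : sigma (- beta' h (l - h)) * sigma (- gamma l) =
    sigma (- gamma h) * sigma (- gamma (l - h)) * sigma (- beta h (l - h)).
  rewrite -!sigma_add -!opprD; congr (sigma (- _)).
  by rewrite -(cohomologousE beta_cohom) subrKC.
by rewrite -[LHS]mulrA sigma_cohom; ring.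
Qed.

Lemma is_val_scale_sigma (leH : H -> H -> Prop) (v : K -> A) f x :
    (forall y z, y <> 0 -> z <> 0 -> v (y * z) = v y + v z) ->
    (forall a, v (sigma a) = a) ->
  is_val leH v f x -> is_val leH v (ser_scale c f) (shiftGb gamma x).
Proof.
move=> v_mul sigma_v /(is_val_scale (c := c) (fun h => @sigma_nz (- gamma h)) v_mul).
by rewrite /c sigma_v.
Qed.

End CrossSection.

Section Transversals.
Variables (G A H : zmodType) (iota : A -> G) (rho : G -> H).
Hypothesis iota_sub : forall a b, iota (a - b) = iota a - iota b.
Hypothesis iota_inj : injective iota.
Hypothesis rho_sub : forall x y, rho (x - y) = rho x - rho y.
Hypothesis rho_ker : forall g, rho g = 0 <-> exists a, iota a = g.

Variables (alpha alpha' : H -> G) (beta beta' : H -> H -> A).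
Hypotheses (alpha_sec : forall h, rho (alpha h) = h) (alpha'_sec : forall h, rho (alpha' h) = h).
Hypothesis beta_def : forall h h', iota (beta h h') = alpha (h + h') - alpha h - alpha h'.
Hypothesis beta'_def : forall h h', iota (beta' h h') = alpha' (h + h') - alpha' h - alpha' h'.

Lemma transversal_cocycles_cohomologous :
  exists gamma : H -> A, forall h h', beta h h' = beta' h h' + coboundary gamma h h'.
Proof.
pose iotaM : {additive A -> G} := HB.pack iota (GRing.isZmodMorphism.Build A G iota iota_sub).
have alpha_diff h : exists a, iota a = alpha h - alpha' h.
  by apply/rho_ker; rewrite rho_sub alpha_sec alpha'_sec subrr.
have [gamma gammaE] := choice alpha_diff.
have iota_cobound h h' :
    iota (coboundary gamma h h') = coboundary (fun h => alpha h - alpha' h) h h'.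
  by rewrite -[iota]/(iotaM : _ -> _) !raddfB /= !gammaE.
exists gamma => h h'; apply: iota_inj.
by rewrite -[iota]/(iotaM : _ -> _) raddfD /= iota_cobound coboundaryB beta_def beta'_def subrKC.
Qed.

End Transversals.

Theorem proposition2p3
  (* the ordered abelian group G *)
  (G : zmodType) (leG : G -> G -> Prop)
  (HG : ordered_abelian_group leG)
  (* A, given through an injective additive embedding iota whose image is the
     smallest nonzero convex subgroup of G *)
  (A : zmodType) (iota : A -> G)
  (iota_add : forall a b, iota (a - b) = iota a - iota b)
  (iota_inj : injective iota)
  (HA : smallest_nonzero_convex_subgroup leG (fun x => exists a, iota a = x))
  (* H = G/A with the induced order, rho the projection *)
  (H : zmodType) (leH : H -> H -> Prop) (rho : G -> H)
  (rho_add : forall x y, rho (x - y) = rho x - rho y)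
  (rho_surj : forall h, exists g, rho g = h)
  (rho_ker : forall g, rho g = 0 <-> exists a, iota a = g)
  (leH_induced : forall h h',
     leH h h' <-> exists g g', [/\ rho g = h, rho g' = h' & leG g g'])
  (* the valued field (K, v) of characteristic 0 with value group A *)
  (K : fieldType) (HK : [pchar K] =i pred0) (v : K -> A)
  (v_mul : forall x y, x <> 0 -> y <> 0 -> v (x * y) = v x + v y)
  (v_add : forall x y, x <> 0 -> y <> 0 -> x + y <> 0 ->
     leA leG iota (v x) (v (x + y)) \/ leA leG iota (v y) (v (x + y)))
  (v_surj : forall a, exists x, x <> 0 /\ v x = a)
  (* the cross-section sigma : A -> K^x *)
  (sigma : A -> K)
  (sigma_nz : forall a, sigma a <> 0)
  (sigma_add : forall a b, sigma (a + b) = sigma a * sigma b)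
  (sigma_v : forall a, v (sigma a) = a)
  (* the infinite cardinal delta, as the cardinality of a type D *)
  (D : Type) (D_inf : exists e : nat -> D, injective e)
  (* two transversal maps and their cocycles *)
  (alpha alpha' : H -> G)
  (alpha_sec : forall h, rho (alpha h) = h) (alpha0 : alpha 0 = 0)
  (alpha'_sec : forall h, rho (alpha' h) = h) (alpha'0 : alpha' 0 = 0)
  (beta beta' : H -> H -> A)
  (beta_def : forall h h', iota (beta h h') = alpha (h + h') - alpha h - alpha h')
  (beta'_def : forall h h', iota (beta' h h') = alpha' (h + h') - alpha' h - alpha' h') :
  (* a valued field isomorphism phi : K(t^H,beta')_delta -> K(t^H,beta)_delta
     together with an ordered group isomorphism psi : G_beta' -> G_beta such
     that val (phi f) = psi (val' f) *)
  exists (phi : (H -> K) -> (H -> K)) (psi : A * H -> A * H),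
    (forall f, is_series leH D f -> is_series leH D (phi f)) /\
    (forall g, is_series leH D g -> exists f, is_series leH D f /\ phi f = g) /\
    (forall f g, is_series leH D f -> is_series leH D g -> phi f = phi g -> f = g) /\
    (forall f g, is_series leH D f -> is_series leH D g ->
       phi (ser_add f g) = ser_add (phi f) (phi g)) /\
    (forall f g, is_series leH D f -> is_series leH D g ->
       phi (ser_mul sigma beta' f g) = ser_mul sigma beta (phi f) (phi g)) /\
    bijective psi /\
    (forall x y, psi (addGb beta' x y) = addGb beta (psi x) (psi y)) /\
    (forall x y, leGb leG leH iota x y <-> leGb leG leH iota (psi x) (psi y)) /\
    (forall f x, is_series leH D f -> is_val leH v f x ->
       is_val leH v (phi f) (psi x)).
Proof.
have [gamma beta_cohom] := transversal_cocycles_cohomologous iota_add iota_inj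
  rho_add rho_ker alpha_sec alpha'_sec beta_def beta'_def.
pose c h := sigma (- gamma h).
have c_nz h : c h <> 0 by apply: sigma_nz.
have cK : cancel (ser_scale c) (ser_scale (sigma \o gamma)).
  by apply: ser_scaleK => h; apply: (sigmaNK sigma_nz sigma_add).
have cVK : cancel (ser_scale (sigma \o gamma)) (ser_scale c).
  by apply: ser_scaleK => h; rewrite mulrC; apply: (sigmaNK sigma_nz sigma_add).
exists (ser_scale c), (shiftGb gamma); split.
  by move=> f; rewrite is_series_scale.
split.
  move=> g sg; exists (ser_scale (sigma \o gamma) g); rewrite cVK; split=> //.
  by rewrite -(is_series_scale _ _ c_nz) cVK.
split; first by move=> f g _ _; apply: (can_inj cK).
split; first by move=> f g _ _; apply: ser_scaleD.
split; first by move=> f g _ _; apply: (ser_mul_scale sigma_add beta_cohom).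
split; first exact: bijective_shiftGb.
split; first by move=> x y; apply: (shiftGb_addGb beta_cohom).
split; first by move=> x y; rewrite (leGb_shiftGb HG iota_add).
by move=> f x _; apply: (is_val_scale_sigma sigma_nz gamma v_mul sigma_v).
Qed.
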